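(* Let $f:\mathbb{Z}^N\to\mathbb{R}\cup\{+\infty\}$ be an M-convex function with unique minimizer $x^*$, let $\hat{x}\in\mathbb{R}^N$, and let $x^\circ\in\arg\min\{\|x-\lfloor\hat{x}\rceil\|_1 : x\in\operatorname{dom} f\}$. Then $\|x^*-x^\circ\|_1\le 4\|\hat{x}-x^*\|_1$.
   Context: $N=\{1,\dots,n\}$, $e_i$ is the $i$th unit vector, $\operatorname{dom} f=\{x\in\mathbb{Z}^N: f(x)<+\infty\}$. A proper $f$ is M-convex if for all $x,y\in\operatorname{dom} f$ and every $i$ with $x_i>y_i$ there is $j$ with $x_j<y_j$ and $f(x)+f(y)\ge f(x-e_i+e_j)+f(y+e_i-e_j)$. $\lfloor\cdot\rceil$ is element-wise rounding to a closest integer. *)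

From mathcomp Require Import all_boot all_order all_algebra.
From mathcomp Require Import reals constructive_ereal.
Set Implicit Arguments. Unset Strict Implicit. Unset Printing Implicit Defensive.
Import Order.TTheory GRing.Theory Num.Theory.
Local Open Scope ring_scope.
Local Open Scope ereal_scope.

(* Integer points of Z^N, N = {0,...,n-1}. *)
Notation zvec n := {ffun 'I_n -> int}.

Definition exch {n : nat} (x : zvec n) (i j : 'I_n) : zvec n :=
  [ffun k => (x k - (k == i)%:Z + (k == j)%:Z)%R].

Definition in_dom {R : realType} {n : nat} (f : zvec n -> \bar R) (x : zvec n) : Prop :=
  f x < +oo.

Definition Mconvex {R : realType} {n : nat} (f : zvec n -> \bar R) : Prop :=
  (forall x, f x != -oo) /\
  (exists x, in_dom f x) /\
  (forall x y, in_dom f x -> in_dom f y ->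
     forall i, (y i < x i)%R ->
       exists j, (x j < y j)%R /\
         f (exch x i j) + f (exch y j i) <= f x + f y).

Definition l1z {n : nat} (x y : zvec n) : int := (\sum_(i < n) `|x i - y i|)%R.

Definition l1rz {R : realType} {n : nat} (a : 'I_n -> R) (y : zvec n) : R :=
  (\sum_(i < n) `|a i - (y i)%:~R|)%R.

Definition is_rounding {R : realType} {n : nat} (a : 'I_n -> R) (z : zvec n) : Prop :=
  forall i (k : int), (`|a i - (z i)%:~R| <= `|a i - k%:~R|)%R.

From mathcomp Require Import all_boot all_order all_algebra.
From mathcomp Require Import reals constructive_ereal.
Import Order.TTheory GRing.Theory Num.Theory.
Local Open Scope ring_scope.

(* Write z for the rounding of xhat.  The bound is a purely
   metric fact about the l1 distance.
   Chaining both with y = xstar gives the factor 4. *)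

Lemma l1z_triangle {n : nat} (x y w : zvec n) :
  l1z x y <= l1z x w + l1z y w.
Proof.
rewrite /l1z -big_split /=; apply: ler_sum => i _.
by rewrite (distrC (y i)); apply: ler_distD.
Qed.

Lemma l1_rounding {R : realType} {n : nat} (a : 'I_n -> R) (z y : zvec n) :
  is_rounding a z -> (l1z y z)%:~R <= 2 * l1rz a y.
Proof.
move=> round_z; rewrite /l1z /l1rz rmorph_sum /= mulr_sumr.
apply: ler_sum => i _.
rewrite intr_norm rmorphB /= mulr2n mulrDl mul1r.
apply: le_trans (ler_distD (a i) _ _) _.
by rewrite distrC lerD2l; apply: round_z.
Qed.

Lemma l1_nearest {n : nat} {D : zvec n -> Prop} {z xo y : zvec n} :
  (forall x, D x -> l1z xo z <= l1z x z) -> D y ->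
  l1z y xo <= 2 * l1z y z.
Proof.
move=> xo_nearest Dy; rewrite mulr2n mulrDl mul1r.
apply: le_trans (l1z_triangle y xo z) _.
by rewrite lerD2l; apply: xo_nearest.
Qed.

Theorem mainTheorem2 (R : realType) (n : nat) (f : zvec n -> \bar R)
  (xstar : zvec n) (xhat : 'I_n -> R) (z : zvec n) (xo : zvec n) :
  Mconvex f ->
  in_dom f xstar ->
  (forall x, x != xstar -> (f xstar < f x)%E) ->
  is_rounding xhat z ->
  in_dom f xo ->
  (forall x, in_dom f x -> l1z xo z <= l1z x z) ->
  (l1z xstar xo)%:~R <= 4 * l1rz xhat xstar.
Proof.
move=> _ dom_xstar _ round_z _ xo_nearest.
have near_xo : l1z xstar xo <= 2 * l1z xstar z.
  exact: l1_nearest xo_nearest dom_xstar.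
have near_z : (l1z xstar z)%:~R <= 2 * l1rz xhat xstar.
  exact: l1_rounding round_z.
have near_xo_R : (l1z xstar xo)%:~R <= 2 * (l1z xstar z)%:~R :> R.
  by rewrite -[2 : R]/(2%:~R) -intrM ler_int.
have -> : (4 : R) = 2 * 2 by rewrite -natrM.
by rewrite -mulrA; apply: le_trans near_xo_R (ler_wpM2l _ near_z).
Qed.
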